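(* Let $X$ be a finite dimensional real or complex Banach space, $K\subseteq B_X$ a Borel set, and $\mu$ an admissible probability measure on $K$. Then there is a point $\psi_0\in S_{X^*}$, depending on $\mu$, such that for every $n\in\mathbb N$ $$\mathbf c_n(X)\le \exp\left\{-n\int_K\log|\langle x,\psi_0\rangle|\,d\mu(x)\right\}.$$
   Context: For a Banach space $Y$, $B_Y$ and $S_Y$ denote its closed unit ball and unit sphere. For a Banach space $X$ over $\mathbb K\in\{\mathbb R,\mathbb C\}$ and $n\in\mathbb N$, $\mathbf c_n(X)$ is the smallest constant such that for all $\psi_1,\dots,\psi_n\in X^*$, $\|\psi_1\|\cdots\|\psi_n\|\le \mathbf c_n(X)\,\|\psi_1\cdots\psi_n\|$, where $\psi_1\cdots\psi_n$ is the pointwise product and $\|P\|=\sup_{x\in S_X}|P(x)|$. Admissibility: a Borel measure $\mu$ on a Borel set $K\subseteq B_X$ is admissible if $\int_K\log|\langle x,\psi\rangle|\,d\mu(x)$ is finite for every $\psi\in S_{X^*}$ and the functions $g_m(\psi)=\int_K\max\{\log|\langle x,\psi\rangle|,-m\}\,d\mu(x)$ converge uniformly on $S_{X^*}$, as $m\to\infty$, to $g(\psi)=\int_K\log|\langle x,\psi\rangle|\,d\mu(x)$. *)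

From HB Require Import structures.
From mathcomp Require Import all_boot all_order all_algebra.
From mathcomp Require Import all_classical all_reals all_analysis.
From mathcomp Require Import complex.

Set Implicit Arguments.
Unset Strict Implicit.
Unset Printing Implicit Defensive.

Import Order.TTheory GRing.Theory Num.Theory.
Local Open Scope classical_set_scope.
Local Open Scope ring_scope.

Inductive RorC (R : realType) : forall K : fieldType, (K -> R) -> Prop :=
  | RorC_real : @RorC R R (fun a : R => `|a|)
  | RorC_complex : @RorC R R[i] (@ComplexField.Normc.normc R).

Section Defs.
Variables (R : realType) (K : fieldType) (absK : K -> R) (d : nat).

(* The finite dimensional space X is K^d (row vectors) with a norm N. *)
Local Notation X := 'rV[K]_d.

Definition is_norm (N : X -> R) : Prop :=
  [/\ forall x, N x = 0 -> x = 0,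
      forall (a : K) x, N (a *: x) = absK a * N x
    & forall x y, N (x + y) <= N x + N y].

Definition norm_open (N : X -> R) (A : set X) : Prop :=
  forall x, A x -> exists e : R, 0 < e /\ [set y | N (y - x) < e] `<=` A.

Definition unit_ball (N : X -> R) : set X := [set x | N x <= 1].
Definition unit_sphere (N : X -> R) : set X := [set x | N x = 1].

(* sup-norm on the unit sphere: ||P|| = sup_{x in S_X} |P(x)|;
   for a linear functional this is its dual norm *)
Definition supnorm (N : X -> R) (f : X -> K) : R :=
  sup [set absK (f x) | x in unit_sphere N].

Definition elog (t : R) : \bar R := if t == 0 then -oo%E else (ln t)%:E.

(* c_n(X): the smallest constant c with
   ||psi_1|| ... ||psi_n|| <= c ||psi_1 ... psi_n|| for all psi_i in X^*
   (infimum in the extended reals, +oo if no such constant exists) *)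
Definition cconst (N : X -> R) (n : nat) : \bar R :=
  ereal_inf [set c%:E | c in [set c : R | forall psi : 'I_n -> {scalar X},
     \prod_(i < n) supnorm N (psi i)
       <= c * supnorm N (fun x => \prod_(i < n) psi i x)]].

End Defs.

(* K^d as a pointed type (point 0), needed to build the sigma-algebra *)
Definition ptrow (K : fieldType) (d : nat) : Type := 'rV[K]_d.
HB.instance Definition _ (K : fieldType) (d : nat) := Choice.on (ptrow K d).
HB.instance Definition _ (K : fieldType) (d : nat) :=
  isPointed.Build (ptrow K d) (0 : 'rV[K]_d).

Definition borelX (R : realType) (K : fieldType) (d : nat) (N : 'rV[K]_d -> R) :=
  @g_sigma_algebraType (ptrow K d) (norm_open N).

Section Admissible.
Variables (R : realType) (K : fieldType) (absK : K -> R) (d : nat)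
  (N : 'rV[K]_d -> R).
Local Notation X := (borelX N).

Definition glog (mu : {measure set X -> \bar R}) (Kset : set X)
    (psi : {scalar 'rV[K]_d}) : \bar R :=
  (\int[mu]_(x in Kset) elog (absK (psi x)))%E.

Definition glog_trunc (mu : {measure set X -> \bar R}) (Kset : set X)
    (m : nat) (psi : {scalar 'rV[K]_d}) : \bar R :=
  (\int[mu]_(x in Kset) maxe (elog (absK (psi x))) (- (m%:R)%:E))%E.

Definition admissible (mu : {measure set X -> \bar R}) (Kset : set X) : Prop :=
  (forall psi : {scalar 'rV[K]_d}, supnorm absK N psi = 1 ->
      glog mu Kset psi \is a fin_num) /\
  (forall e : R, 0 < e -> exists M : nat, forall m : nat, (M <= m)%N ->
      forall psi : {scalar 'rV[K]_d}, supnorm absK N psi = 1 ->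
      (`| glog_trunc mu Kset m psi - glog mu Kset psi | < e%:E)%E).

End Admissible.

From HB Require Import structures.
From mathcomp Require Import all_boot all_order all_algebra.
From mathcomp Require Import all_classical all_reals all_analysis.
From mathcomp Require Import complex.
From mathcomp Require Import lra.
Import Order.TTheory GRing.Theory Num.Theory.
Import numFieldNormedType.Exports.
Local Open Scope classical_set_scope.
Local Open Scope ring_scope.

Set Implicit Arguments.
Unset Strict Implicit.
Unset Printing Implicit Defensive.

(** Normalise the functionals to the unit sphere of the dual. Since [Kset] lies in the
    unit ball and [P = psi_1 * ... * psi_n] is [n]-homogeneous, [|P x| <= ||P||] on [Kset],
    so integrating [log |.|] against the probability [mu] gives
    [g psi_1 + ... + g psi_n <= log ||P||], hence [||P|| >= exp (n * g psi_0)] for a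
    minimiser [psi_0] of [g] on the dual sphere. The minimiser exists because the dual
    sphere is sequentially compact (Bolzano-Weierstrass on coordinates, once all norms on
    [K^d] are known to be equivalent) and [g] is continuous, being by admissibility the
    uniform limit of the truncations [g_m], which are Lipschitz in the functional. The
    integrals are computed through the [g_m] as well, so that only bounded integrands
    occur. *)

Lemma increasing_seq_comp (f g : nat -> nat) :
  increasing_seq f -> increasing_seq g -> increasing_seq (f \o g).
Proof. by move=> fi gi m n; rewrite /= fi. Qed.

Lemma cvg_subseq {T : topologicalType} (u : nat -> T) (f : nat -> nat) (l : T) :
  increasing_seq f -> u n @[n --> \oo] --> l -> u (f n) @[n --> \oo] --> l.
Proof.
move=> fi ul; apply: cvg_comp ul; apply/cvgnyPge => A; near=> n.
by apply: leq_trans (unstable.mono_leq_infl fi n); near: n; exact: nbhs_infty_ge.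
Unshelve. all: by end_near. Qed.

Lemma cvgn_sum (R : realType) (I : Type) (r : seq I) (F : I -> nat -> R) (l : I -> R) :
  (forall i, F i n @[n --> \oo] --> l i) ->
  \sum_(i <- r) F i n @[n --> \oo] --> \sum_(i <- r) l i.
Proof.
by move=> Fl; exact: (@cvg_big R I +%R 0 xpredT add_continuous _ _ r F l _ (fun i _ => Fl i)).
Qed.

(* All that is used of the modulus of the scalar field; R and C = R[i] both satisfy it. *)
Record proper_abs (R : realType) (K : fieldType) (absK : K -> R) : Prop := {
  abs_ge0 : forall x, 0 <= absK x;
  abs_eq0 : forall x, (absK x == 0) = (x == 0);
  absM : forall x y, absK (x * y) = absK x * absK y;
  abs_triangle : forall x y, absK (x + y) <= absK x + absK y;
  abs_onto : forall r, 0 <= r -> exists c, absK c = r;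
  abs_bolzano_weierstrass : forall (u : nat -> K) (B : R),
    (forall n, absK (u n) <= B) ->
    exists2 f : nat -> nat, increasing_seq f &
      exists l, absK (u (f n) - l) @[n --> \oo] --> 0 }.

Lemma normr_proper_abs (R : realType) : proper_abs (fun x : R => `|x|).
Proof.
split => //; [exact: normr_eq0 | exact: normrM | exact: ler_normD | |].
  by move=> r r0; exists r; rewrite ger0_norm.
move=> u B uB; have [f fi /cvg_ex[l ufl]] : exists2 f : nat -> nat,
    increasing_seq f & cvgn (u \o f).
  by apply: bolzano_weierstrass; exists B; split; rewrite ?num_real// => M BM n _;
    exact: le_trans (uB n) (ltW BM).
exists f => //; exists l; apply/cvgrPdist_lt => e e0; near=> n.
rewrite sub0r normrN normr_id distrC.
by near: n; move/cvgrPdist_lt : ufl; exact.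
Unshelve. all: by end_near. Qed.

Section ComplexAbs.
Context (R : realType).
Local Notation normc := (@ComplexField.Normc.normc R).
Local Open Scope complex_scope.

Lemma normc_sqrt (a b : R) : normc (a +i* b) = Num.sqrt (a ^+ 2 + b ^+ 2).
Proof. by []. Qed.

Lemma normc_ge0 x : 0 <= normc x.
Proof. by case: x => a b; rewrite normc_sqrt sqrtr_ge0. Qed.

Lemma normc_ge_absRe x : `|complex.Re x| <= normc x.
Proof. by case: x => a b; rewrite normc_sqrt -sqrtr_sqr ler_wsqrtr// lerDl sqr_ge0. Qed.

Lemma normc_ge_absIm x : `|complex.Im x| <= normc x.
Proof. by case: x => a b; rewrite normc_sqrt -sqrtr_sqr ler_wsqrtr// lerDr sqr_ge0. Qed.

Lemma normc_le_absReIm x : normc x <= `|complex.Re x| + `|complex.Im x|.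
Proof.
case: x => a b; change (Num.sqrt (a ^+ 2 + b ^+ 2) <= `|a| + `|b|).
rewrite -[X in _ <= X]ger0_norm ?addr_ge0// -[X in _ <= X]sqrtr_sqr.
rewrite ler_sqrt ?sqr_ge0// -(real_normK (num_real a)) -(real_normK (num_real b)).
by have := normr_ge0 a; have := normr_ge0 b; nra.
Qed.

Lemma normc_proper_abs : proper_abs normc.
Proof.
split.
- exact: normc_ge0.
- move=> x; apply/eqP/eqP => [/ComplexField.Normc.eq0_normc//|->].
  exact: ComplexField.Normc.normc0.
- exact: ComplexField.Normc.normcM.
- exact: le_normcD.
- by move=> r r0; exists (r +i* 0); rewrite normc_sqrt expr0n addr0 sqrtr_sqr ger0_norm.
move=> u B uB.
have [f fi [a ua]] := abs_bolzano_weierstrass (normr_proper_abs R)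
  (fun n => le_trans (normc_ge_absRe _) (uB n)).
have [g gi [b ub]] := abs_bolzano_weierstrass (normr_proper_abs R)
  (fun n => le_trans (normc_ge_absIm _) (uB (f n))).
exists (f \o g); first exact: increasing_seq_comp.
exists (a +i* b).
pose v n := u (f (g n)) - a +i* b.
have vE n : v n = (complex.Re (u (f (g n))) - a) +i* (complex.Im (u (f (g n))) - b).
  by rewrite /v; case: (u _).
apply: (@squeeze_cvgr _ _ _ _ (cst 0) (fun n =>
  `|complex.Re (u (f (g n))) - a| + `|complex.Im (u (f (g n))) - b|)) (cvg_cst _) _.
  by near=> n; rewrite normc_ge0 /= -/(v n) vE; exact: normc_le_absReIm.
have := cvgD (@cvg_subseq _ (fun n => `|complex.Re (u (f n)) - a|) _ _ gi ua) ub.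
by rewrite addr0; apply.
Unshelve. all: by end_near. Qed.

End ComplexAbs.

Lemma RorC_proper_abs (R : realType) (K : fieldType) (absK : K -> R) :
  RorC absK -> proper_abs absK.
Proof. by case; [exact: normr_proper_abs | exact: normc_proper_abs]. Qed.

Section ProperAbsTheory.
Variables (R : realType) (K : fieldType) (absK : K -> R) (hA : proper_abs absK).

Lemma abs0 : absK 0 = 0.
Proof. by apply/eqP; rewrite (abs_eq0 hA). Qed.

Lemma abs_gt0 x : x != 0 -> 0 < absK x.
Proof. by move=> x0; rewrite lt_def (abs_eq0 hA) x0 (abs_ge0 hA). Qed.

Lemma abs1 : absK 1 = 1.
Proof.
apply: (mulfI (lt0r_neq0 (abs_gt0 (oner_neq0 K)))).
by rewrite -(absM hA) !mulr1.
Qed.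

Lemma absN x : absK (- x) = absK x.
Proof.
have : absK (-1) ^+ 2 = 1 by rewrite expr2 -(absM hA) mulrNN mulr1 abs1.
move/eqP; rewrite sqrf_eq1 => /orP[/eqP N1|/eqP N1].
  by rewrite -mulN1r (absM hA) N1 mul1r.
by have := abs_ge0 hA (-1); rewrite N1 ler0N1.
Qed.

Lemma absB x y : absK (x - y) = absK (y - x).
Proof. by rewrite -absN opprB. Qed.

Lemma absV x : absK x^-1 = (absK x)^-1.
Proof.
have [->|x0] := eqVneq x 0; first by rewrite invr0 abs0 invr0.
apply: (mulfI (lt0r_neq0 (abs_gt0 x0))).
by rewrite -(absM hA) !divff ?abs1 // lt0r_neq0 // abs_gt0.
Qed.

Lemma abs_prod (I : Type) (r : seq I) (F : I -> K) :
  absK (\prod_(i <- r) F i) = \prod_(i <- r) absK (F i).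
Proof. by elim: r => [|i r ih]; rewrite ?big_nil ?abs1 // !big_cons (absM hA) ih. Qed.

Lemma absX x n : absK (x ^+ n) = absK x ^+ n.
Proof. by elim: n => [|n ih]; rewrite ?abs1 // !exprS (absM hA) ih. Qed.

Lemma abs_sum_le (I : Type) (r : seq I) (F : I -> K) :
  absK (\sum_(i <- r) F i) <= \sum_(i <- r) absK (F i).
Proof.
elim: r => [|i r ih]; first by rewrite !big_nil abs0.
by rewrite !big_cons (le_trans (abs_triangle hA _ _)) // lerD2l.
Qed.

Lemma ler_dist_abs x y : `|absK x - absK y| <= absK (x - y).
Proof.
have := abs_triangle hA (x - y) y; have := abs_triangle hA (y - x) x.
by rewrite !subrK absB ler_norml => *; apply/andP; split; lra.
Qed.

End ProperAbsTheory.

Section Coordinates.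
Variables (R : realType) (K : fieldType) (absK : K -> R) (hA : proper_abs absK).
Variable d : nat.
Local Notation X := 'rV[K]_d.

Definition l1norm (x : X) : R := \sum_i absK (x 0 i).

Lemma l1norm_ge0 (x : X) : 0 <= l1norm x.
Proof. by apply: sumr_ge0 => i _; exact: abs_ge0. Qed.

Lemma abs_coord_le_l1norm (x : X) i : absK (x 0 i) <= l1norm x.
Proof.
by rewrite /l1norm (bigD1 i) //= lerDl; apply: sumr_ge0 => j _; exact: abs_ge0.
Qed.

Lemma l1normZ c (x : X) : l1norm (c *: x) = absK c * l1norm x.
Proof. by rewrite /l1norm mulr_sumr; apply: eq_bigr => i _; rewrite mxE (absM hA). Qed.

Lemma l1normB (x y : X) : l1norm (x - y) = l1norm (y - x).
Proof. by apply: eq_bigr => i _; rewrite !mxE (absB hA). Qed.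

Lemma rowv_bolzano_weierstrass (u : nat -> X) (B : R) :
  (forall n i, absK (u n 0 i) <= B) ->
  exists2 f : nat -> nat, increasing_seq f &
    exists a, l1norm (u (f n) - a) @[n --> \oo] --> 0.
Proof.
move=> uB.
suff [f fi [a ua]] : exists2 f : nat -> nat, increasing_seq f & exists a : 'I_d -> K,
    forall i, i \in enum 'I_d -> absK (u (f n) 0 i - a i) @[n --> \oo] --> 0.
  exists f => //; exists (\row_i a i).
  have -> : 0 = \sum_(i < d) (0 : R) by rewrite big1.
  apply: cvgn_sum => i.
  by under eq_fun do rewrite !mxE; apply: ua; rewrite mem_enum.
elim: (enum 'I_d) => [|j s [f fi [a ua]]]; first by exists id => //; exists (fun=> 0).
have [g gi [l ul]] := abs_bolzano_weierstrass hA (fun n => uB (f n) j).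
exists (f \o g); first exact: increasing_seq_comp.
exists (fun i => if i == j then l else a i) => i; rewrite in_cons.
have [->|_ /ua] //= := eqVneq i j.
exact: (@cvg_subseq _ (fun n => absK (u (f n) 0 i - a i))).
Qed.

Definition row_functional (a : X) (x : X) : K := \sum_i x 0 i * a 0 i.

Lemma row_functional_is_linear (a : X) : linear_for *%R (row_functional a).
Proof.
move=> c x y; rewrite /row_functional mulr_sumr -big_split /=.
by apply: eq_bigr => i _; rewrite !mxE mulrDl mulrA.
Qed.

HB.instance Definition _ a := GRing.isLinear.Build K X K _ (row_functional a)
  (row_functional_is_linear a).

Definition scalar_of_row (a : X) : {scalar X} := row_functional a.

Definition row_of_scalar (psi : {scalar X}) : X := \row_i psi (delta_mx 0 i).

Lemma scalar_of_rowK (psi : {scalar X}) x : scalar_of_row (row_of_scalar psi) x = psi x.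
Proof.
rewrite [in RHS](row_sum_delta x) linear_sum; apply: eq_bigr => i _.
by rewrite linearZ mxE.
Qed.

Lemma row_of_scalarK (a : X) : row_of_scalar (scalar_of_row a) = a.
Proof.
apply/rowP => i; rewrite mxE /= /row_functional (bigD1 i) //= big1 => [|j ji].
  by rewrite mxE !eqxx mul1r addr0.
by rewrite mxE (negbTE ji) andbF mul0r.
Qed.

Lemma abs_scalar_of_row_le (a x : X) : absK (scalar_of_row a x) <= l1norm x * l1norm a.
Proof.
apply: le_trans (abs_sum_le hA _ _) _; rewrite mulr_suml; apply: ler_sum => i _.
by rewrite (absM hA) ler_wpM2l ?abs_ge0 ?abs_coord_le_l1norm.
Qed.

Definition scalar_dist (psi phi : {scalar X}) : R :=
  l1norm (row_of_scalar psi - row_of_scalar phi).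

Lemma abs_scalarB_le (psi phi : {scalar X}) x :
  absK (psi x - phi x) <= l1norm x * scalar_dist psi phi.
Proof.
have -> : psi x - phi x = scalar_of_row (row_of_scalar psi - row_of_scalar phi) x.
  rewrite -[psi x]scalar_of_rowK -[phi x]scalar_of_rowK /= /row_functional -sumrB.
  by apply: eq_bigr => i _; rewrite !mxE mulrBr.
exact: abs_scalar_of_row_le.
Qed.

End Coordinates.

Section NormedSpace.
Variables (R : realType) (K : fieldType) (absK : K -> R) (hA : proper_abs absK).
Variables (d : nat) (N : 'rV[K]_d -> R) (hN : is_norm absK N).
Local Notation X := 'rV[K]_d.

Lemma norm_eq0 (x : X) : N x = 0 -> x = 0.
Proof. by case: hN => h _ _; apply: h. Qed.

Lemma normZ c (x : X) : N (c *: x) = absK c * N x.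
Proof. by case: hN => _ h _; apply: h. Qed.

Lemma norm_triangle (x y : X) : N (x + y) <= N x + N y.
Proof. by case: hN => _ _ h; apply: h. Qed.

Lemma norm0 : N 0 = 0.
Proof. by rewrite -(scale0r 0) normZ (abs0 hA) mul0r. Qed.

Lemma normN (x : X) : N (- x) = N x.
Proof. by rewrite -scaleN1r normZ (absN hA) abs1 // mul1r. Qed.

Lemma normB (x y : X) : N (x - y) = N (y - x).
Proof. by rewrite -normN opprB. Qed.

Lemma norm_ge0 (x : X) : 0 <= N x.
Proof. by have := norm_triangle x (- x); rewrite subrr norm0 normN -mulr2n pmulrn_lge0. Qed.

Lemma norm_gt0 (x : X) : x != 0 -> 0 < N x.
Proof. by move=> x0; rewrite lt_def norm_ge0 andbT; apply: contra x0 => /eqP/norm_eq0 ->. Qed.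

Lemma norm_sum_le (I : Type) (r : seq I) (F : I -> X) :
  N (\sum_(i <- r) F i) <= \sum_(i <- r) N (F i).
Proof.
elim: r => [|i r ih]; first by rewrite !big_nil norm0.
by rewrite !big_cons (le_trans (norm_triangle _ _)) // lerD2l.
Qed.

Lemma norm_le_l1norm (x : X) : N x <= l1norm absK x * \sum_i N (delta_mx 0 i).
Proof.
rewrite {1}(row_sum_delta x); apply: le_trans (norm_sum_le _ _) _.
rewrite mulr_sumr; apply: ler_sum => i _; rewrite normZ ler_wpM2r ?norm_ge0 //.
exact: abs_coord_le_l1norm.
Qed.

Lemma normalize_vector (x : X) :
  x != 0 -> exists c : K, absK c = (N x)^-1 /\ N (c *: x) = 1.
Proof.
move=> x0; have [c cE] : exists c, absK c = (N x)^-1.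
  by apply: (abs_onto hA); rewrite invr_ge0 norm_ge0.
by exists c; rewrite normZ cE mulVf // lt0r_neq0 // norm_gt0.
Qed.

Lemma l1norm_le_norm : exists C, forall x, l1norm absK x <= C * N x.
Proof.
(* Otherwise vectors z n with l1norm 1 and N (z n) --> 0 accumulate at some a with
   N a = 0 and l1norm a = 1. *)
apply: contrapT => noC.
have /choice[x xP] : forall n, exists y : X, n.+1%:R * N y < l1norm absK y.
  move=> n; apply: contrapT => /forallNP xP; apply: noC; exists n.+1%:R => y.
  by rewrite leNgt; apply/negP/xP.
have l1x_gt0 n : 0 < l1norm absK (x n).
  by apply: le_lt_trans (xP n); rewrite mulr_ge0 ?norm_ge0.
have /choice[c cE] : forall n, exists c : K, absK c = (l1norm absK (x n))^-1.
  by move=> n; apply: (abs_onto hA); rewrite invr_ge0 ltW.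
pose z n := c n *: x n.
have l1z n : l1norm absK (z n) = 1 by rewrite l1normZ // cE mulVf // gt_eqF.
have Nz n : N (z n) <= harmonic n.
  rewrite normZ cE /=.
  by rewrite mulrC ler_pdivrMr // mulrC ler_pdivlMr ?ltr0Sn // mulrC ltW.
have [f fi [a za]] : exists2 f : nat -> nat, increasing_seq f &
    exists a, l1norm absK (z (f n) - a) @[n --> \oo] --> 0.
  apply: (rowv_bolzano_weierstrass hA (B := 1)) => n i.
  by rewrite -(l1z n) abs_coord_le_l1norm.
pose B := \sum_i N (delta_mx 0 i).
have a0 : a = 0.
  apply/norm_eq0/le_anti; rewrite norm_ge0 andbT.
  have hB : l1norm absK (z (f n) - a) * B + harmonic (f n) @[n --> \oo] --> 0.
    rewrite -[X in _ --> X](addr0 0) -[X in _ --> X + _](mul0r B).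
    by apply: cvgD; [exact: cvgMl | exact: (@cvg_subseq _ (@harmonic R) _ _ fi cvg_harmonic)].
  apply: (ler_cvg_to (cvg_cst (N a)) hB); near=> n.
  have := norm_triangle (a - z (f n)) (z (f n)); rewrite subrK => /le_trans; apply.
  by rewrite lerD // normB norm_le_l1norm.
suff : 1 <= 0 :> R by rewrite ler10.
apply: (ler_cvg_to (cvg_cst (1 : R)) za); near=> n.
by rewrite a0 subr0 l1z.
Unshelve. all: by end_near. Qed.
End NormedSpace.

Section SupNorm.
Variables (R : realType) (K : fieldType) (absK : K -> R) (hA : proper_abs absK).
Variables (d : nat) (hd : (0 < d)%N) (N : 'rV[K]_d -> R) (hN : is_norm absK N).
Local Notation X := 'rV[K]_d.
Local Notation sn := (supnorm absK N).

Definition sphere_bounded (f : X -> K) := exists B, forall x, N x = 1 -> absK (f x) <= B.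

Lemma exists_unit : exists u : X, N u = 1.
Proof.
have e0 : delta_mx 0 (Ordinal hd) != 0 :> X.
  by apply/eqP => /rowP/(_ (Ordinal hd)); rewrite !mxE !eqxx => /eqP; rewrite oner_eq0.
by have [c [_ cE]] := normalize_vector hA hN e0; exists (c *: delta_mx 0 (Ordinal hd)).
Qed.

Lemma supnorm_le (f : X -> K) B : (forall x, N x = 1 -> absK (f x) <= B) -> sn f <= B.
Proof.
move=> fB; apply: ge_sup => [|_ [x x1 <-]]; last exact: fB.
by have [u u1] := exists_unit; exists (absK (f u)), u.
Qed.

Lemma le_supnorm (f : X -> K) x : sphere_bounded f -> N x = 1 -> absK (f x) <= sn f.
Proof.
move=> [B fB] x1; apply: ub_le_sup; last by exists x.
by exists B => _ [y y1 <-]; exact: fB.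
Qed.

Lemma supnorm_ge0 (f : X -> K) : 0 <= sn f.
Proof.
have [fb|fnb] := pselect (sphere_bounded f).
  by have [u u1] := exists_unit; exact: le_trans (abs_ge0 hA _) (le_supnorm fb u1).
rewrite /supnorm sup_out // => -[_ [B fB]]; apply: fnb; exists B => x x1.
by apply: fB; exists x.
Qed.

Lemma abs_homogeneous_le (f : X -> K) n x :
  (forall c y, f (c *: y) = c ^+ n * f y) -> sphere_bounded f ->
  absK (f x) <= sn f * N x ^+ n.
Proof.
move=> fZ fb; have [->|x0] := eqVneq x 0.
  case: n fZ => [|n] fZ.
    have [u u1] := exists_unit.
    by rewrite expr0 mulr1 -(scale0r u) fZ expr0 mul1r le_supnorm.
  rewrite -(scale0r 0) fZ expr0n mul0r (abs0 hA).
  by rewrite mulr_ge0 ?exprn_ge0 ?supnorm_ge0 ?(norm_ge0 hA hN).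
have [c [cE c1]] := normalize_vector hA hN x0.
have c0 : c != 0 by rewrite -(abs_eq0 hA) cE invr_eq0 lt0r_neq0 // (norm_gt0 hA hN).
rewrite -{1}[x](scalerK c0) fZ (absM hA) (absX hA) (absV hA) cE invrK mulrC.
by rewrite ler_wpM2r ?exprn_ge0 ?(norm_ge0 hA hN) ?le_supnorm.
Qed.

Lemma supnormZ (f : X -> K) c : sphere_bounded f -> sn (fun x => c * f x) = absK c * sn f.
Proof.
move=> fb; apply/le_anti/andP; split.
  by apply: supnorm_le => x x1; rewrite (absM hA) ler_wpM2l ?(abs_ge0 hA) ?le_supnorm.
have [->|c0] := eqVneq c 0; first by rewrite abs0 // mul0r supnorm_ge0.
rewrite -ler_pdivlMl ?abs_gt0 //; apply: supnorm_le => x x1.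
rewrite ler_pdivlMl ?abs_gt0 // -(absM hA) le_supnorm //.
have [B fB] := fb; exists (absK c * B) => y y1.
by rewrite (absM hA) ler_wpM2l ?(abs_ge0 hA) ?fB.
Qed.

End SupNorm.

Section Functionals.
Variables (R : realType) (K : fieldType) (absK : K -> R) (hA : proper_abs absK).
Variables (d : nat) (hd : (0 < d)%N) (N : 'rV[K]_d -> R) (hN : is_norm absK N).
Variables (C : R) (hC : forall x, l1norm absK x <= C * N x).
Local Notation X := 'rV[K]_d.
Local Notation sn := (supnorm absK N).

Lemma norm_equiv_ge0 : 0 <= C.
Proof.
have [u u1] := exists_unit hA hd hN.
by rewrite -[C]mulr1 -u1 (le_trans _ (hC u)) ?l1norm_ge0.
Qed.

Lemma abs_scalarB_le_norm (psi phi : {scalar X}) x :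
  absK (psi x - phi x) <= C * N x * scalar_dist absK psi phi.
Proof.
apply: le_trans (abs_scalarB_le hA _ _ _) _.
by rewrite ler_wpM2r ?l1norm_ge0.
Qed.

Lemma scalar_sphere_bounded (psi : {scalar X}) : sphere_bounded absK N psi.
Proof.
exists (C * l1norm absK (row_of_scalar psi)) => x x1.
rewrite -scalar_of_rowK; apply: le_trans (abs_scalar_of_row_le hA _ _) _.
by rewrite ler_wpM2r ?l1norm_ge0 // -[C]mulr1 -x1.
Qed.

Lemma abs_scalar_le (psi : {scalar X}) x : absK (psi x) <= sn psi * N x.
Proof.
rewrite -[N x]expr1; apply: (abs_homogeneous_le hA hd hN) => [c y|].
  by rewrite linearZ expr1.
exact: scalar_sphere_bounded.
Qed.

Lemma scalar_distC (psi phi : {scalar X}) :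
  scalar_dist absK psi phi = scalar_dist absK phi psi.
Proof. exact: l1normB. Qed.

Lemma supnorm_scalar_le (psi phi : {scalar X}) :
  sn psi <= sn phi + C * scalar_dist absK psi phi.
Proof.
apply: (supnorm_le hA hd hN) => x x1.
rewrite -(subrK (phi x) (psi x)) addrC; apply: le_trans (abs_triangle hA _ _) (lerD _ _).
  exact: le_supnorm (scalar_sphere_bounded phi) x1.
by have := abs_scalarB_le_norm psi phi x; rewrite x1 mulr1.
Qed.

Lemma normalize_scalar (psi : {scalar X}) : 0 < sn psi ->
  exists phi : {scalar X}, exists c : K,
    [/\ sn phi = 1, absK c = (sn psi)^-1 & forall x, phi x = c * psi x].
Proof.
move=> psi_gt0; have [c cE] : exists c, absK c = (sn psi)^-1.
  by apply: (abs_onto hA); rewrite invr_ge0 ltW.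
pose phi := scalar_of_row (c *: row_of_scalar psi).
have phiE x : phi x = c * psi x.
  rewrite -[psi x]scalar_of_rowK /= /row_functional mulr_sumr.
  by apply: eq_bigr => i _; rewrite mxE mulrCA.
exists phi, c; split => //.
rewrite (_ : phi = (fun x => c * psi x) :> (X -> K)); last exact: funext.
by rewrite (supnormZ hA hd hN _ (scalar_sphere_bounded psi)) cE mulVf ?gt_eqF.
Qed.

Lemma exists_unit_scalar : exists psi : {scalar X}, sn psi = 1.
Proof.
pose e : X := delta_mx 0 (Ordinal hd); pose psi := scalar_of_row e.
have psie : psi e = 1.
  by have := congr1 (fun r : X => r 0 (Ordinal hd)) (row_of_scalarK e); rewrite !mxE eqxx.
have e0 : e != 0 by apply: contra_eq_neq psie => ->; rewrite linear0 eq_sym oner_neq0.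
have [c [cE ce1]] := normalize_vector hA hN e0.
have c0 : c != 0 by rewrite -(abs_eq0 hA) cE invr_eq0 lt0r_neq0 // (norm_gt0 hA hN).
suff /normalize_scalar[phi [? [phi1 _ _]]] : 0 < sn psi by exists phi.
apply: lt_le_trans (abs_gt0 hA c0) _.
by have := le_supnorm (scalar_sphere_bounded psi) ce1; rewrite linearZ /= psie mulr1.
Qed.

Lemma abs_prod_scalar_le (I : Type) (r : seq I) (psi : I -> {scalar X}) x :
  N x = 1 -> absK (\prod_(i <- r) psi i x) <= \prod_(i <- r) sn (psi i).
Proof.
move=> x1; rewrite (abs_prod hA); apply: ler_prod => i _.
by rewrite abs_ge0 //= -[leRHS]mulr1 -x1 abs_scalar_le.
Qed.

Lemma prod_scalar_sphere_bounded (I : Type) (r : seq I) (psi : I -> {scalar X}) :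
  sphere_bounded absK N (fun x => \prod_(i <- r) psi i x).
Proof. by exists (\prod_(i <- r) sn (psi i)) => x; exact: abs_prod_scalar_le. Qed.

Lemma unit_scalar_seq_compact (u : nat -> {scalar X}) : (forall n, sn (u n) = 1) ->
  exists2 f : nat -> nat, increasing_seq f &
    exists2 psi : {scalar X}, sn psi = 1 &
      scalar_dist absK psi (u (f n)) @[n --> \oo] --> 0.
Proof.
move=> u1; pose B := \sum_j N (delta_mx 0 j).
have [f fi [a ua]] : exists2 f : nat -> nat, increasing_seq f &
    exists a, l1norm absK (row_of_scalar (u (f n)) - a) @[n --> \oo] --> 0.
  apply: (@rowv_bolzano_weierstrass _ _ _ hA _ (fun n => row_of_scalar (u n)) B) => n i.
  rewrite mxE.
  apply: le_trans (abs_scalar_le _ _) _; rewrite u1 mul1r /B (bigD1 i) //= lerDl.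
  by apply: sumr_ge0 => j _; exact: (norm_ge0 hA hN).
pose psi := scalar_of_row a.
have psi_u : scalar_dist absK psi (u (f n)) @[n --> \oo] --> 0.
  by under eq_fun do rewrite /scalar_dist row_of_scalarK (l1normB hA).
exists f => //; exists psi => //.
have dist0 : C * scalar_dist absK psi (u (f n)) @[n --> \oo] --> 0.
  by rewrite -(mulr0 C); exact: cvgMr.
apply/le_anti/andP; split.
  have : 1 + C * scalar_dist absK psi (u (f n)) @[n --> \oo] --> (1 + 0 : R).
    by apply: cvgD => //; exact: cvg_cst.
  rewrite addr0 => /(ler_cvg_to (cvg_cst (sn psi))); apply; near=> n.
  by rewrite -(u1 (f n)) supnorm_scalar_le.
have : sn psi + C * scalar_dist absK psi (u (f n)) @[n --> \oo] --> (sn psi + 0 : R).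
  by apply: cvgD => //; exact: cvg_cst.
rewrite addr0 => /(ler_cvg_to (cvg_cst (1 : R))); apply; near=> n.
by rewrite -(u1 (f n)) (le_trans (supnorm_scalar_le _ psi)) // scalar_distC.
Unshelve. all: by end_near. Qed.

End Functionals.

Section Measurability.
Variables (R : realType) (K : fieldType) (absK : K -> R) (hA : proper_abs absK).
Variables (d : nat) (N : 'rV[K]_d -> R) (hN : is_norm absK N).
Variables (C : R) (hC : forall x, l1norm absK x <= C * N x).
Local Notation X := 'rV[K]_d.

Lemma lipschitz_measurable (h : X -> R) (L : R) :
  (forall x y, `|h x - h y| <= L * N (x - y)) ->
  measurable_fun (setT : set (borelX N)) h.
Proof.
move=> hL; apply: (measurability _ (measurable_realfun.RGenOInfty.measurableE R)).
move=> _ [_ [a ->] <-]; apply: sub_sigma_algebra => x [_ /=].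
rewrite in_itv /= andbT => ax.
have L1_gt0 : 0 < `|L| + 1 by rewrite ltr_wpDl.
exists ((h x - a) / (`|L| + 1)); split; first by rewrite divr_gt0 ?subr_gt0.
move=> y /= Nyx; split => //=; rewrite in_itv /= andbT.
have h1 : h x - h y <= (`|L| + 1) * N (y - x).
  apply: le_trans (ler_norm _) (le_trans (hL x y) _); rewrite (normB hA hN).
  by rewrite ler_wpM2r ?(norm_ge0 hA hN) // (le_trans (ler_norm L)) ?lerDl.
have h2 : (`|L| + 1) * N (y - x) < h x - a by rewrite mulrC -ltr_pdivlMr.
lra.
Qed.

Lemma measurable_abs_scalar (psi : {scalar X}) :
  measurable_fun (setT : set (borelX N)) (fun x => absK (psi x)).
Proof.
apply: (lipschitz_measurable (L := C * l1norm absK (row_of_scalar psi))) => x y.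
apply: le_trans (ler_dist_abs hA _ _) _; rewrite -linearB -scalar_of_rowK.
rewrite mulrAC; apply: le_trans (abs_scalar_of_row_le hA _ _) _.
by rewrite ler_wpM2r ?l1norm_ge0.
Qed.

End Measurability.

Section TruncatedLog.
Variable R : realType.

(* [trunc_ln m t = max (ln t) (- m)], the integrand of the paper's g_m (see [maxe_elog]). *)
Definition trunc_ln (m : nat) (t : R) : R := ln (Num.max t (expR (- m%:R))).

Lemma expR_trunc_ln m t : expR (trunc_ln m t) = Num.max t (expR (- m%:R)).
Proof. by rewrite lnK // posrE lt_max expR_gt0 orbT. Qed.

Lemma trunc_ln_ge m t : - m%:R <= trunc_ln m t.
Proof. by rewrite -ler_expR expR_trunc_ln le_max lexx orbT. Qed.

Lemma trunc_ln_le0 m t : t <= 1 -> trunc_ln m t <= 0.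
Proof.
by move=> t1; rewrite -ler_expR expR_trunc_ln expR0 ge_max t1 expR_le1 oppr_le0 ler0n.
Qed.

Lemma measurable_trunc_ln m : measurable_fun setT (trunc_ln m).
Proof.
have -> : trunc_ln m = @ln R \o (fun t => Num.max t (expR (- m%:R))) by [].
apply: measurableT_comp; first exact: measurable_realfun.measurable_ln.
exact: measurable_realfun.measurable_maxr.
Qed.

Lemma maxe_elog m t : 0 <= t -> maxe (elog t) (- (m%:R)%:E)%E = (trunc_ln m t)%:E.
Proof.
move=> t0; rewrite /elog /trunc_ln; have [->|t_neq0] := eqVneq t 0.
  by rewrite maxNye max_r ?expR_ge0 // expRK.
rewrite -EFinN -EFin_max; congr (_%:E); have t_gt0 : 0 < t by rewrite lt_def t_neq0.
have [tm|mt] := leP t (expR (- m%:R)).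
  by rewrite expRK max_r // -ler_expR lnK.
by rewrite max_l // -ler_expR lnK // ltW.
Qed.

Lemma ler_dist_ln (a b c : R) : 0 < c -> c <= a -> c <= b ->
  `|ln a - ln b| <= `|a - b| / c.
Proof.
wlog ba : a b / b <= a.
  move=> wlog_ba c0 ca cb; have [ba|/ltW ab] := leP b a; first exact: wlog_ba.
  by rewrite distrC [`|a - b|]distrC; exact: wlog_ba.
move=> c0 ca cb; have [a0 b0] : 0 < a /\ 0 < b by split; apply: lt_le_trans c0 _.
rewrite !ger0_norm ?subr_ge0 ?ler_ln ?posrE // -ln_div ?posrE //.
have -> : a / b = 1 + (a - b) / b by rewrite mulrBl divff ?gt_eqF // addrC subrK.
apply: le_trans (le_ln1Dx _) _.
  by rewrite (lt_le_trans _ (divr_ge0 _ (ltW b0))) ?subr_ge0 // ltrN10.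
by rewrite ler_wpM2l ?subr_ge0 // lef_pV2 ?posrE.
Qed.

Lemma ler_dist_max (s t c : R) : `|Num.max s c - Num.max t c| <= `|s - t|.
Proof.
rewrite ler_norml; have := ler_norm (s - t); have := ler_norm (t - s).
by rewrite distrC; case: (leP s c); case: (leP t c) => *; apply/andP; split; lra.
Qed.

Lemma trunc_ln_lipschitz m (s t : R) :
  `|trunc_ln m s - trunc_ln m t| <= expR m%:R * `|s - t|.
Proof.
have c_gt0 : 0 < expR (- m%:R) :> R := expR_gt0 _.
apply: le_trans (ler_dist_ln c_gt0 _ _) _; rewrite ?le_max ?lexx ?orbT //.
by rewrite expRN invrK mulrC ler_wpM2l ?expR_ge0 ?ler_dist_max.
Qed.

End TruncatedLog.

Section RintegralSum.
Context d (T : measurableType d) (R : realType) (mu : {measure set T -> \bar R}).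
Variables (D : set T) (mD : measurable D).

Lemma integrable_sumR (I : Type) (r : seq I) (h : I -> T -> R) :
  (forall i, mu.-integrable D (EFin \o h i)) ->
  mu.-integrable D (EFin \o (fun x => \sum_(i <- r) h i x)).
Proof.
move=> hi; elim: r => [|i r ih].
  by under eq_fun do rewrite big_nil; exact: integrable0.
under eq_fun do rewrite big_cons; exact: (integrableD mD (hi i) ih).
Qed.

Lemma Rintegral_sum (I : Type) (r : seq I) (h : I -> T -> R) :
  (forall i, mu.-integrable D (EFin \o h i)) ->
  \int[mu]_(x in D) \sum_(i <- r) h i x = \sum_(i <- r) \int[mu]_(x in D) h i x.
Proof.
move=> hi; elim: r => [|i r ih].
  by under eq_Rintegral do rewrite big_nil; rewrite Rintegral_cst // mul0r big_nil.
under eq_Rintegral do rewrite big_cons.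
by rewrite RintegralD ?big_cons ?ih //; exact: integrable_sumR.
Qed.

End RintegralSum.

Lemma prod_maxr_le (R : realType) (I : Type) (r : seq I) (a : I -> R) (c : R) :
  (forall i, 0 <= a i <= 1) -> 0 <= c <= 1 ->
  \prod_(i <- r) Num.max (a i) c <= Num.max (\prod_(i <- r) a i) c.
Proof.
move=> a01 /andP[c0 c1]; elim: r => [|i r ih]; first by rewrite !big_nil le_max lexx.
have /andP[ai0 ai1] := a01 i.
have [p0 p1] : 0 <= \prod_(j <- r) a j /\ \prod_(j <- r) a j <= 1.
  by split; [apply: prodr_ge0 | apply: prodr_ile1] => j _; have /andP[] := a01 j.
rewrite !big_cons; apply: le_trans (ler_wpM2l _ ih) _; first by rewrite le_max ai0.
rewrite le_max; apply/orP.
have [ac|ca] := leP (a i) c; have [pc|cp] := leP (\prod_(j <- r) a j) c.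
- by right; nra.
- by right; nra.
- by right; nra.
- by left.
Qed.

Section TruncatedLogIntegral.
Variables (R : realType) (K : fieldType) (absK : K -> R) (hA : proper_abs absK).
Variables (d : nat) (hd : (0 < d)%N) (N : 'rV[K]_d -> R) (hN : is_norm absK N).
Variables (C : R) (hC : forall x, l1norm absK x <= C * N x).
Variables (mu : {measure set (borelX N) -> \bar R}) (Kset : set (borelX N)).
Hypotheses (mK : measurable Kset) (Kball : Kset `<=` unit_ball N) (muK : mu Kset = 1%E).
Local Notation X := 'rV[K]_d.
Local Notation sn := (supnorm absK N).

Definition glog_truncR (m : nat) (psi : {scalar X}) : R :=
  \int[mu]_(x in Kset) trunc_ln m (absK (psi x)).

Lemma abs_scalar_le1 (psi : {scalar X}) x : sn psi = 1 -> Kset x -> absK (psi x) <= 1.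
Proof.
move=> psi1 Kx; apply: le_trans (abs_scalar_le hA hd hN hC psi x) _.
by rewrite psi1 mul1r; exact: Kball.
Qed.

Lemma integrable_bounded (f : X -> R) (B : R) :
  measurable_fun (setT : set (borelX N)) f -> (forall x, Kset x -> `|f x| <= B) ->
  mu.-integrable Kset (EFin \o f).
Proof.
move=> mf fB; apply: measurable_bounded_integrable => //; first by rewrite muK ltry.
  exact: measurable_funS mf.
by exists B; split; rewrite ?num_real // => M BM x Kx; apply: le_trans (fB x Kx) (ltW BM).
Qed.

Lemma trunc_ln_scalar_integrable m (psi : {scalar X}) : sn psi = 1 ->
  mu.-integrable Kset (EFin \o (fun x => trunc_ln m (absK (psi x)))).
Proof.
move=> psi1; apply: (integrable_bounded (B := m%:R)) => [|x Kx].
  exact: measurableT_comp (measurable_trunc_ln m) (measurable_abs_scalar hA hN hC psi).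
have := trunc_ln_ge m (absK (psi x)); have := trunc_ln_le0 m (abs_scalar_le1 psi1 Kx).
by rewrite ler_norml => *; apply/andP; split; lra.
Qed.

Lemma glog_truncE m (psi : {scalar X}) : sn psi = 1 ->
  glog_trunc absK mu Kset m psi = (glog_truncR m psi)%:E.
Proof.
move=> psi1; rewrite /glog_trunc.
rewrite (eq_integral (fun x : borelX N => (trunc_ln m (absK (psi x)))%:E)).
  rewrite /glog_truncR /Rintegral fineK //.
  by apply: integrable_fin_num => //; exact: trunc_ln_scalar_integrable.
by move=> x _; rewrite maxe_elog ?(abs_ge0 hA).
Qed.

Let integrable_cst (r : R) : mu.-integrable Kset (EFin \o cst r).
Proof. by apply: (integrable_bounded (B := `|r|)) => // x _; rewrite lexx. Qed.

Lemma glog_truncR_ge m (psi : {scalar X}) : sn psi = 1 -> - m%:R <= glog_truncR m psi.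
Proof.
move=> psi1; have := Rintegral_cst mu mK (- m%:R); rewrite muK /= mulr1 => <-.
apply: le_Rintegral => //; first exact: integrable_cst.
  exact: trunc_ln_scalar_integrable.
by move=> x _; exact: trunc_ln_ge.
Qed.

Lemma glog_truncR_lipschitz m (psi phi : {scalar X}) : sn psi = 1 -> sn phi = 1 ->
  glog_truncR m psi - glog_truncR m phi <= expR m%:R * C * scalar_dist absK psi phi.
Proof.
move=> psi1 phi1; have ipsi := trunc_ln_scalar_integrable m psi1.
have iphi := trunc_ln_scalar_integrable m phi1.
rewrite /glog_truncR -RintegralB //.
have := Rintegral_cst mu mK (expR m%:R * C * scalar_dist absK psi phi).
rewrite muK /= mulr1 => <-; apply: le_Rintegral => //.
- exact: (integrableB mK ipsi iphi).
- exact: integrable_cst.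
move=> x Kx; apply: le_trans (ler_norm _) (le_trans (trunc_ln_lipschitz _ _ _) _).
rewrite -mulrA ler_wpM2l ?expR_ge0 //; apply: le_trans (ler_dist_abs hA _ _) _.
apply: le_trans (abs_scalarB_le_norm hA hC _ _ _) _.
rewrite ler_wpM2r ?l1norm_ge0 // ler_piMr ?(norm_equiv_ge0 hA hd hN hC) //.
exact: Kball.
Qed.

Lemma glog_truncR_dist_le m (psi phi : {scalar X}) : sn psi = 1 -> sn phi = 1 ->
  `|glog_truncR m psi - glog_truncR m phi| <= expR m%:R * C * scalar_dist absK psi phi.
Proof.
move=> psi1 phi1; rewrite ler_norml; apply/andP; split.
  by rewrite lerNl opprB (scalar_distC hA); exact: glog_truncR_lipschitz.
exact: glog_truncR_lipschitz.
Qed.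

Lemma expR_sum_glog_truncR_le n (psi : 'I_n -> {scalar X}) m :
  (forall i, sn (psi i) = 1) ->
  expR (\sum_i glog_truncR m (psi i)) <=
    Num.max (sn (fun x => \prod_i psi i x)) (expR (- m%:R)).
Proof.
move=> psi1; set P := fun x => \prod_i psi i x.
have maxP_gt0 : 0 < Num.max (sn P) (expR (- m%:R)) by rewrite lt_max expR_gt0 orbT.
rewrite -[leRHS]lnK ?posrE // ler_expR /glog_truncR -(Rintegral_sum mK); last first.
  by move=> i; exact: trunc_ln_scalar_integrable.
have := Rintegral_cst mu mK (ln (Num.max (sn P) (expR (- m%:R)))).
rewrite muK /= mulr1 => <-; apply: le_Rintegral => //.
- by apply: (integrable_sumR mK) => i; exact: trunc_ln_scalar_integrable.
- exact: integrable_cst.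
move=> x Kx; rewrite -ler_expR lnK ?posrE // expR_sum.
under eq_bigr do rewrite expR_trunc_ln.
have abs01 i : 0 <= absK (psi i x) <= 1 by rewrite abs_ge0 // abs_scalar_le1.
have c01 : 0 <= expR (- m%:R : R) <= 1.
  by rewrite expR_ge0 expR_le1 oppr_le0 ler0n.
apply: le_trans (prod_maxr_le _ abs01 c01) _.
rewrite ge_max [X in _ && X]le_max lexx orbT andbT le_max; apply/orP; left.
rewrite -(abs_prod hA).
apply: le_trans (@abs_homogeneous_le _ _ _ hA _ hd _ hN P n x _ _) _.
- move=> c y; rewrite /P (eq_bigr (fun i => c * psi i y)); last by move=> i _; rewrite linearZ.
  by rewrite big_split /= prodr_const card_ord.
- exact: (prod_scalar_sphere_bounded hA hd hN hC).
rewrite ler_piMr ?(supnorm_ge0 hA hd hN) // exprn_ile1 ?(norm_ge0 hA hN) //.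
exact: Kball.
Qed.

Section Admissible.
Hypothesis hadm : admissible absK mu Kset.
Local Notation g psi := (fine (glog absK mu Kset psi)).

Lemma glogE (psi : {scalar X}) : sn psi = 1 -> glog absK mu Kset psi = (g psi)%:E.
Proof. by move=> psi1; rewrite fineK //; exact: hadm.1. Qed.

Lemma glog_truncR_uniform e : 0 < e -> exists M, forall m, (M <= m)%N ->
  forall psi : {scalar X}, sn psi = 1 -> `|glog_truncR m psi - g psi| < e.
Proof.
move=> e0; have [M HM] := hadm.2 e e0; exists M => m Mm psi psi1.
by have := HM m Mm psi psi1; rewrite glog_truncE // glogE // -EFinB abse_EFin lte_fin.
Qed.

Lemma glog_truncR_cvg (psi : {scalar X}) : sn psi = 1 ->
  glog_truncR m psi @[m --> \oo] --> g psi.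
Proof.
move=> psi1; apply/cvgrPdist_lt => e e0; have [M HM] := glog_truncR_uniform e0.
near=> m; rewrite distrC HM //; near: m; exact: nbhs_infty_ge.
Unshelve. all: by end_near. Qed.

Lemma glog_lbound : exists lb, forall psi : {scalar X}, sn psi = 1 -> lb <= g psi.
Proof.
have [M HM] := glog_truncR_uniform ltr01; exists (- M%:R - 1) => psi psi1.
have := glog_truncR_ge M psi1; have := HM M (leqnn M) psi psi1.
by rewrite ltr_norml => /andP[] *; lra.
Qed.

Lemma glog_cvg (u : nat -> {scalar X}) (psi : {scalar X}) :
  (forall n, sn (u n) = 1) -> sn psi = 1 ->
  scalar_dist absK psi (u n) @[n --> \oo] --> 0 -> g (u n) @[n --> \oo] --> g psi.
Proof.
move=> u1 psi1 du; apply/cvgrPdist_lt => e e0.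
have e3 : 0 < e / 3 by rewrite divr_gt0.
have [M HM] := glog_truncR_uniform e3.
have Ldu : expR M%:R * C * scalar_dist absK psi (u n) @[n --> \oo] --> 0.
  by rewrite -(mulr0 (expR M%:R * C)); exact: cvgMr.
near=> n.
have := HM M (leqnn M) psi psi1; have := HM M (leqnn M) (u n) (u1 n).
have := glog_truncR_dist_le M psi1 (u1 n).
have : expR M%:R * C * scalar_dist absK psi (u n) < e / 3 by near: n; exact: cvgr_lt Ldu _ e3.
move: (glog_truncR M psi) (glog_truncR M (u n)) (g psi) (g (u n)) => a b x y.
rewrite !ltr_norml ler_norml => ? /andP[? ?] /andP[? ?] /andP[? ?].
by apply/andP; split; lra.
Unshelve. all: by end_near. Qed.

Lemma glog_has_min : exists2 psi0 : {scalar X}, sn psi0 = 1 &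
  forall psi : {scalar X}, sn psi = 1 -> g psi0 <= g psi.
Proof.
have [lb glb] := glog_lbound.
pose E := [set g psi | psi in [set psi : {scalar X} | sn psi = 1]].
have infE : has_inf E.
  split; last by exists lb => _ [psi psi1 <-]; exact: glb.
  by have [psi psi1] := exists_unit_scalar hA hd hN hC; exists (g psi), psi.
have /choice[u uE] : forall n, exists psi : {scalar X},
    sn psi = 1 /\ g psi < inf E + harmonic n.
  move=> n; have [_ [psi psi1 <-]] := inf_adherent (harmonic_gt0 n) infE.
  by exists psi.
have [f fi [psi0 psi01 du]] := unit_scalar_seq_compact hA hd hN hC (fun n => (uE n).1).
exists psi0 => // psi psi1; apply: le_trans (ge_inf infE.2 _); last by exists psi.
have : inf E + harmonic (f n) @[n --> \oo] --> (inf E + 0 : R).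
  by apply: cvgD; [exact: cvg_cst | exact: (@cvg_subseq _ (@harmonic R) _ _ fi cvg_harmonic)].
rewrite addr0 => /(ler_cvg_to (glog_cvg (fun n => (uE (f n)).1) psi01 du)); apply.
by near=> n; exact/ltW/(uE (f n)).2.
Unshelve. all: by end_near. Qed.

Lemma expR_sum_glog_le n (psi : 'I_n -> {scalar X}) : (forall i, sn (psi i) = 1) ->
  expR (\sum_i g (psi i)) <= sn (fun x => \prod_i psi i x).
Proof.
move=> psi1; set P := fun x => \prod_i psi i x.
have lhs : expR (\sum_i glog_truncR m (psi i)) @[m --> \oo] --> expR (\sum_i g (psi i)).
  apply: (@continuous_cvg _ _ _ _ _ (fun m => \sum_i glog_truncR m (psi i)) expR _
    (@continuous_expR R _)).
  by apply: cvgn_sum => i; exact: glog_truncR_cvg.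
have rhs : sn P + expR (- m%:R) @[m --> \oo] --> (sn P + 0 : R).
  by apply: cvgD; [exact: cvg_cst | exact: cvgn_expR].
rewrite addr0 in rhs; apply: (ler_cvg_to lhs rhs); near=> m.
apply: le_trans (expR_sum_glog_truncR_le m psi1) _.
by rewrite ge_max lerDl expR_ge0 lerDr (supnorm_ge0 hA hd hN).
Unshelve. all: by end_near. Qed.

Lemma prod_supnorm_le (psi0 : {scalar X}) :
  (forall psi : {scalar X}, sn psi = 1 -> g psi0 <= g psi) ->
  forall n (psi : 'I_n -> {scalar X}),
  \prod_i sn (psi i) <= expR (- (n%:R * g psi0)) * sn (fun x => \prod_i psi i x).
Proof.
move=> g_min n psi; have sn_ge0 := supnorm_ge0 hA hd hN.
have [[i psi_i0]|psi_neq0] := pselect (exists i, sn (psi i) = 0).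
  by rewrite (bigD1 i) //= psi_i0 mul0r mulr_ge0 ?expR_ge0.
have psi_gt0 i : 0 < sn (psi i).
  rewrite lt_def sn_ge0 andbT; apply/eqP => psi_i0; apply: psi_neq0; exists i.
  exact: psi_i0.
have /choice[phi /choice[c phiP]] := fun i => normalize_scalar hA hd hN hC (psi_gt0 i).
have phi1 i : sn (phi i) = 1 by have [] := phiP i.
have cE i : absK (c i) = (sn (psi i))^-1 by have [] := phiP i.
have prod_phiE : (fun x => \prod_i phi i x) = (fun x => \prod_i c i * \prod_i psi i x).
  by apply/funext => x; rewrite -big_split; apply: eq_bigr => i _; have [_ _ ->] := phiP i.
have := expR_sum_glog_le phi1.
rewrite prod_phiE (supnormZ hA hd hN _ (prod_scalar_sphere_bounded hA hd hN hC _ _)).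
rewrite (abs_prod hA) (eq_bigr _ (fun i _ => cE i)) prodfV.
have prod_gt0 : 0 < \prod_i sn (psi i) by apply: prodr_gt0.
rewrite -ler_pdivrMl ?invr_gt0 // invrK mulrC => prod_le.
apply: le_trans (ler_wpM2l (expR_ge0 _) prod_le); rewrite mulrA -expRD ler_peMl //.
  by rewrite ltW.
apply: le_trans (expR_ge1Dx _); rewrite lerDl addrC subr_ge0.
apply: le_trans (_ : _ <= \sum_(i < n) g psi0) _.
  by rewrite sumr_const card_ord mulr_natl.
by apply: ler_sum => i _; exact: g_min.
Qed.

End Admissible.

End TruncatedLogIntegral.

Theorem proposition1p6 (R : realType) (K : fieldType) (absK : K -> R)
    (hK : RorC absK) (d : nat) (hd : (0 < d)%N) (N : 'rV[K]_d -> R)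
    (hN : is_norm absK N)
    (Kset : set (borelX N)) (hKmeas : measurable Kset)
    (hKball : Kset `<=` unit_ball N)
    (mu : probability (borelX N) R) (hmuK : mu Kset = 1%E)
    (hadm : admissible absK mu Kset) :
  exists psi0 : {scalar 'rV[K]_d},
    supnorm absK N psi0 = 1 /\
    forall n : nat,
      (cconst absK N n <= (expR (- (n%:R * fine (glog absK mu Kset psi0))))%:E)%E.
Proof.
have hA := RorC_proper_abs hK.
have [C hC] := l1norm_le_norm hA hN.
have [psi0 psi01 g_min] := glog_has_min hA hd hN hC hKmeas hKball hmuK hadm.
exists psi0; split => // n; apply: ereal_inf_lbound => /=.
exists (expR (- (n%:R * fine (glog absK mu Kset psi0)))) => //.
exact: (prod_supnorm_le hA hd hN hC hKmeas hKball hmuK hadm g_min).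
Qed.
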